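(* Let $G$ be a graph and $v\in V(G)$. Then \[ |M_{G-v}|+\alpha(v;G)\le |M_G|\le |M_{G-v}|+\sum_{p\in N(v)}|M_{G-(N[v]\cup N[p])}|. \] Furthermore, equality holds in the first inequality if and only if $\beta(v;G)=\varphi(v;G)$, and equality holds in the second inequality if and only if $\varphi(v;G)=0$.
   Context: Graphs are finite, simple, undirected. An induced matching is a matching whose endpoints induce a $1$-regular subgraph; it is maximal if not properly contained in another induced matching; $M_G$ is the set of maximal induced matchings of $G$ (a graph with no edges has exactly one, the empty matching). For $S\subseteq V(G)$, $G-S$ is the subgraph induced by $V(G)\setminus S$. $M_G(\emptyset,\{v\})$ is the set of maximal induced matchings of $G$ covering $v$. $\alpha(v;G)$ is the number of $M\in M_G(\emptyset,\{v\})$ such that removing from $M$ the edge incident with $v$ yields an induced matching that is not maximal in $G-v$; $\beta(v;G)$ is the number of $M\in M_G(\emptyset,\{v\})$ such that removing the edge incident with $v$ yields a maximal induced matching of $G-v$. $\varphi(v;G)$ is the number of maximal induced matchings of $G-v$ that are not maximal induced matchings of $G$. *)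

(* A finite simple graph is a symmetric irreflexive relation
   e on a finType T; V(G) = T. Induced subgraphs G[S] are given by vertex sets
   S : {set T}; in particular G - X is the induced subgraph on ~: X. *)
From mathcomp Require Import all_boot.
Set Implicit Arguments. Unset Strict Implicit. Unset Printing Implicit Defensive.

Section Graphs.
Variables (T : finType) (e : rel T).

Definition is_edge (S : {set T}) (f : {set T}) : bool :=
  [exists x, exists y, [&& x \in S, y \in S, e x y & f == [set x; y]]].

Definition is_matching (S : {set T}) (M : {set {set T}}) : bool :=
  [forall f in M, is_edge S f] &&
  [forall f in M, forall g in M, (f != g) ==> [disjoint f & g]].

(* induced matching: the endpoints (cover M) induce a 1-regular subgraph *)
Definition is_induced_matching (S : {set T}) (M : {set {set T}}) : bool :=
  is_matching S M &&
  [forall u in cover M, #|[set w in cover M | e u w]| == 1].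

Definition is_maximal_im (S : {set T}) (M : {set {set T}}) : bool :=
  is_induced_matching S M &&
  [forall M' : {set {set T}}, (M \proper M') ==> ~~ is_induced_matching S M'].

Definition MIM (S : {set T}) : {set {set {set T}}} := [set M | is_maximal_im S M].

Definition drop_at (v : T) (M : {set {set T}}) : {set {set T}} :=
  M :\: [set f in M | v \in f].

Definition alpha (S : {set T}) (v : T) : nat :=
  #|[set M in MIM S | (v \in cover M) && ~~ is_maximal_im (S :\ v) (drop_at v M)]|.

Definition beta (S : {set T}) (v : T) : nat :=
  #|[set M in MIM S | (v \in cover M) && is_maximal_im (S :\ v) (drop_at v M)]|.

Definition phi (S : {set T}) (v : T) : nat :=
  #|[set M in MIM (S :\ v) | M \notin MIM S]|.

Definition nbhd (S : {set T}) (v : T) : {set T} := [set p in S | e v p].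
Definition cnbhd (S : {set T}) (v : T) : {set T} := v |: nbhd S v.

End Graphs.

From mathcomp Require Import all_boot zify.
Set Implicit Arguments. Unset Strict Implicit. Unset Printing Implicit Defensive.

(* The maximal induced matchings of G split into those avoiding v and those
   covering v.  The former are exactly the members of M_{G-v} that stay
   maximal in G, so there are |M_{G-v}| - phi of them; the latter number
   alpha + beta, and grouping them by the partner p of v, deleting the edge vp
   is a bijection onto M_{G-(N[v] u N[p])}.  Hence
   |M_G| = |M_{G-v}| - phi + alpha + beta, and everything follows from
   phi <= beta: a member of M_{G-v} that is not maximal in G extends to some
   M' in M_G covering v, and dropping the edge at v from M' gives it back. *)

Lemma proper_setD1 (aT : finType) (A B : {set aT}) x :
  x \in A -> A \proper B -> A :\ x \proper B :\ x.
Proof.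
move=> xA /[dup] /proper_sub AB; rewrite !properEcard setSD //= => /andP[_].
by rewrite (cardsD1 x A) (cardsD1 x B) xA (subsetP AB x xA).
Qed.

Lemma proper_setU1 (aT : finType) (A B : {set aT}) x :
  x \notin B -> A \proper B -> x |: A \proper x |: B.
Proof.
move=> xB /[dup] /proper_sub AB; rewrite !properEcard setUS //= => /andP[_].
by rewrite !cardsU1 xB (contra (subsetP AB x) xB).
Qed.

Section InducedMatchings.
Variables (T : finType) (e : rel T).
Hypotheses (e_sym : symmetric e) (e_irr : irreflexive e).
Implicit Types (S : {set T}) (f g : {set T}) (M N : {set {set T}}).

Local Notation far S v p := (S :\: (cnbhd e S v :|: cnbhd e S p)).

Lemma is_edgeP S f :
  reflect (exists x y, [/\ x \in S, y \in S, e x y & f = [set x; y]]) (is_edge e S f).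
Proof.
apply: (iffP existsP) => [[x /existsP[y /and4P[xS yS exy /eqP->]]]|[x [y [xS yS exy ->]]]].
  by exists x, y.
by exists x; apply/existsP; exists y; rewrite xS yS exy eqxx.
Qed.

Lemma is_matchingP S M :
  reflect ({in M, forall f, is_edge e S f} /\
           {in M &, forall f g, f != g -> [disjoint f & g]})
          (is_matching e S M).
Proof.
apply: (iffP andP) => [[/forall_inP edgeM /forall_inP disjM]|[edgeM disjM]].
  by split=> // f g fM gM; move/forall_inP/(_ g gM)/implyP: (disjM f fM).
split; first exact/forall_inP.
by apply/forall_inP => f fM; apply/forall_inP => g gM; apply/implyP; apply: disjM.
Qed.

Lemma matching_edge_eq S M f g x :
  is_matching e S M -> f \in M -> g \in M -> x \in f -> x \in g -> f = g.
Proof.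
move=> /is_matchingP[_ disjM] fM gM xf xg; apply/eqP; apply: contraTT xg => neq_fg.
by rewrite (disjointFr (disjM f g fM gM neq_fg) xf).
Qed.

Lemma matching_cover_edge S M u : is_matching e S M -> u \in cover M ->
  exists2 z, [set u; z] \in M & [/\ e u z, u \in S & z \in S].
Proof.
move=> /is_matchingP[edgeM _] /bigcupP[f fM uf].
have /is_edgeP[x [y [xS yS exy def_f]]] := edgeM f fM.
move: uf; rewrite def_f => /set2P[->|->].
  by exists y; rewrite -?def_f.
by exists x; [rewrite setUC -def_f | rewrite e_sym].
Qed.

Lemma matching_cover_sub S M : is_matching e S M -> cover M \subset S.
Proof. by move=> matchM; apply/subsetP => u /(matching_cover_edge matchM)[z _ []]. Qed.

Lemma matching_mate_eq S M u w z :
  is_matching e S M -> [set u; w] \in M -> [set u; z] \in M -> e u w -> w = z.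
Proof.
move=> matchM uwM uzM euw.
have := set22 u w; rewrite (matching_edge_eq matchM uwM uzM (set21 u w) (set21 u z)).
by case/set2P => // wu; rewrite wu e_irr in euw.
Qed.

Lemma matching_mem_edge S M u w :
  is_matching e S M -> [set u; w] \in M -> [/\ e u w, u \in S & w \in S].
Proof.
move=> matchM uwM.
have [|z uzM [euz uS zS]] := matching_cover_edge matchM (u := u).
  by apply/bigcupP; exists [set u; w]; rewrite ?set21.
by rewrite -(matching_mate_eq matchM uzM uwM euz).
Qed.

Lemma card_matching_partners S M v : is_matching e S M ->
  #|[set p in nbhd e S v | [set v; p] \in M]| = (v \in cover M).
Proof.
move=> matchM; have [vM|vM] := boolP (v \in cover M).
  have [z vzM [evz _ zS]] := matching_cover_edge matchM vM.
  apply/eqP/cards1P; exists z; apply/setP => p; rewrite /nbhd !inE.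
  apply/idP/eqP => [/andP[/andP[_ evp] vpM]|->]; last by rewrite zS evz vzM.
  exact: matching_mate_eq matchM vpM vzM evp.
apply/eqP; rewrite cards_eq0; apply/eqP/setP => p; rewrite !inE.
apply: contraNF vM => /andP[_ vpM].
by apply/bigcupP; exists [set v; p]; rewrite ?set21.
Qed.

Lemma is_induced_matchingP S M :
  reflect (is_matching e S M /\ {in cover M &, forall u w, e u w -> [set u; w] \in M})
          (is_induced_matching e S M).
Proof.
apply: (iffP andP) => [[matchM /forall_inP deg1]|[matchM closedM]]; split=> //.
  move=> u w uM wM euw.
  have [z uzM [euz _ _]] := matching_cover_edge matchM uM.
  have /cards1P[y Ny] := deg1 u uM.
  have zN : z \in [set w in cover M | e u w].
    by rewrite inE euz andbT; apply/bigcupP; exists [set u; z]; rewrite ?set22.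
  have wN : w \in [set w in cover M | e u w] by rewrite inE wM euw.
  by move: zN wN; rewrite Ny !inE => /eqP zy /eqP wy; rewrite wy -zy.
apply/forall_inP => u uM; apply/cards1P.
have [z uzM [euz _ _]] := matching_cover_edge matchM uM.
exists z; apply/setP => w; rewrite !inE; apply/andP/eqP => [[wM euw]|->].
  exact: matching_mate_eq matchM (closedM u w uM wM euw) uzM euw.
by split=> //; apply/bigcupP; exists [set u; z]; rewrite ?set22.
Qed.

Lemma induced_matchingW S M : is_induced_matching e S M -> is_matching e S M.
Proof. by case/andP. Qed.

Lemma cover_setU1 f M : cover (f |: M) = f :|: cover M.
Proof. by rewrite /cover bigcup_setU big_set1. Qed.

Lemma induced_matching_widen S S' M :
  is_induced_matching e S M -> cover M \subset S' -> is_induced_matching e S' M.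
Proof.
move=> /is_induced_matchingP[/is_matchingP[edgeM disjM] closedM] /subsetP coverS'.
apply/is_induced_matchingP; split=> //; apply/is_matchingP; split=> // f fM.
have /is_edgeP[x [y [_ _ exy def_f]]] := edgeM f fM.
apply/is_edgeP; exists x, y; split=> //; apply: coverS'; apply/bigcupP; exists f;
  by rewrite // def_f ?set21 ?set22.
Qed.

Lemma induced_matching_subset S M N :
  is_induced_matching e S M -> N \subset M -> is_induced_matching e S N.
Proof.
move=> /is_induced_matchingP[matchM closedM] subNM; have NM := subsetP subNM.
have /is_matchingP[edgeM disjM] := matchM.
apply/is_induced_matchingP; split.
  by apply/is_matchingP; split=> [f /NM|f g /NM fM /NM gM]; [exact: edgeM | exact: disjM].
move=> u w /[dup] uN /bigcupP[g gN ug] /bigcupP[h hN wh] euw.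
have uwM : [set u; w] \in M.
  by apply: closedM euw; apply/bigcupP; [exists g | exists h]; rewrite ?NM.
by rewrite (matching_edge_eq matchM uwM (NM g gN) (set21 u w) ug).
Qed.

Lemma in_far S v p u :
  (u \in far S v p) = [&& u \in S, u != v, u != p, ~~ e v u & ~~ e p u].
Proof.
rewrite /cnbhd /nbhd !inE.
by case: (u \in S); case: (u == v); case: (u == p); case: (e v u); case: (e p u).
Qed.

Lemma matching_far_notin S v p N : is_matching e (far S v p) N -> [set v; p] \notin N.
Proof.
move=> /matching_cover_sub/subsetP coverN; apply/negP => vpN.
have /coverN : v \in cover N by apply/bigcupP; exists [set v; p]; rewrite ?set21.
by rewrite in_far eqxx andbF.
Qed.

Lemma induced_matching_add_edge S v p N :
  v \in S -> p \in S -> e v p -> is_induced_matching e (far S v p) N ->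
  is_induced_matching e S ([set v; p] |: N).
Proof.
move=> vS pS evp indN.
have farN u : u \in cover N -> [&& u \in S, u != v, u != p, ~~ e v u & ~~ e p u].
  by rewrite -in_far; apply: (subsetP (matching_cover_sub (induced_matchingW indN))).
have /is_induced_matchingP[/is_matchingP[edgeN disjN] closedN] : is_induced_matching e S N.
  by apply: induced_matching_widen indN _; apply/subsetP => u /farN/andP[].
apply/is_induced_matchingP; split.
  apply/is_matchingP; split=> [f|f g].
    by case/setU1P => [->|/edgeN//]; apply/is_edgeP; exists v, p.
  have vp_disj h : h \in N -> [disjoint [set v; p] & h].
    move=> hN; have vph x : x \in h -> (x != v) && (x != p).
      by move=> xh; have /farN/and5P[_ -> -> _ _] : x \in cover N by apply/bigcupP; exists h.
    rewrite disjoints_subset subUset !sub1set !inE.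
    by apply/andP; split; apply/negP => /vph; rewrite eqxx ?andbF.
  move=> /setU1P[->|fN] /setU1P[->|gN] neq_fg.
  - by rewrite eqxx in neq_fg.
  - exact: vp_disj.
  - by rewrite disjoint_sym; apply: vp_disj.
  - exact: disjN.
move=> u w; rewrite cover_setU1 => /setUP[uvp|uN] /setUP[wvp|wN] euw.
- move: uvp wvp euw => /set2P[]-> /set2P[]->; rewrite ?e_irr // => _.
    by rewrite setU11.
  by rewrite setUC setU11.
- have /and5P[_ _ _ /negbTE nvw /negbTE npw] := farN w wN.
  by case/set2P: uvp euw => ->; rewrite ?nvw ?npw.
- have /and5P[_ _ _ /negbTE nvu /negbTE npu] := farN u uN.
  by case/set2P: wvp euw => ->; rewrite e_sym ?nvu ?npu.
- by rewrite setU1r ?closedN.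
Qed.

Lemma induced_matching_drop_edge S v p M :
  is_induced_matching e S M -> [set v; p] \in M ->
  is_induced_matching e (far S v p) (M :\ [set v; p]).
Proof.
move=> indM vpM; have /is_induced_matchingP[matchM closedM] := indM.
apply: induced_matching_widen (induced_matching_subset indM (subsetDl _ _)) _.
apply/subsetP => u /bigcupP[g /setD1P[g_vp gM] ug].
have uM : u \in cover M by apply/bigcupP; exists g.
have u_vp : u \notin [set v; p].
  by apply: contra g_vp => u_vp; rewrite (matching_edge_eq matchM gM vpM ug u_vp).
have nadj x : x \in [set v; p] -> ~~ e x u.
  move=> x_vp; apply: contra u_vp => exu.
  have xM : x \in cover M by apply/bigcupP; exists [set v; p].
  by rewrite -(matching_edge_eq matchM (closedM x u xM uM exu) vpM (set21 x u) x_vp) set22.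
rewrite in_far (subsetP (matching_cover_sub matchM) u uM) !nadj ?set21 ?set22 ?andbT //=.
by move: u_vp; rewrite !inE negb_or.
Qed.

Lemma is_maximal_imP S M :
  reflect (is_induced_matching e S M /\
           forall M' : {set {set T}}, M \proper M' -> ~~ is_induced_matching e S M')
          (is_maximal_im e S M).
Proof.
apply: (iffP andP) => [[indM /forallP maxM]|[indM maxM]]; split=> //.
  by move=> M' /(implyP (maxM M')).
by apply/forallP => M'; apply/implyP; apply: maxM.
Qed.

Lemma maximal_imW S M : is_maximal_im e S M -> is_induced_matching e S M.
Proof. by case/andP. Qed.

Lemma induced_matching_extend S M :
  is_induced_matching e S M -> ~~ is_maximal_im e S M ->
  exists2 M' : {set {set T}}, M \proper M' & is_induced_matching e S M'.
Proof.
move=> indM; rewrite /is_maximal_im indM /= => /forallPn[M'].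
by rewrite negb_imply negbK => /andP[]; exists M'.
Qed.

Lemma maximal_im_add_edge S v p N :
  v \in S -> p \in S -> e v p -> is_maximal_im e (far S v p) N ->
  is_maximal_im e S ([set v; p] |: N).
Proof.
move=> vS pS evp /is_maximal_imP[indN maxN].
have vpN := matching_far_notin (induced_matchingW indN).
apply/is_maximal_imP; split; first exact: induced_matching_add_edge.
move=> M ltM; have vpM : [set v; p] \in M by rewrite (subsetP (proper_sub ltM)) ?setU11.
have ltN : N \proper M :\ [set v; p] by rewrite -[N](setU1K vpN) proper_setD1 ?setU11.
apply/negP => indM; move/negP: (maxN _ ltN); apply.
exact: induced_matching_drop_edge.
Qed.

Lemma maximal_im_drop_edge S v p M :
  is_maximal_im e S M -> [set v; p] \in M ->
  is_maximal_im e (far S v p) (M :\ [set v; p]).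
Proof.
move=> /is_maximal_imP[indM maxM] vpM.
have [evp vS pS] := matching_mem_edge (induced_matchingW indM) vpM.
apply/is_maximal_imP; split; first exact: induced_matching_drop_edge.
move=> N ltN; apply/negP => indN.
have ltM : M \proper [set v; p] |: N.
  by rewrite -[M](setD1K vpM) proper_setU1 // (matching_far_notin (induced_matchingW indN)).
by move/negP: (maxM _ ltM); apply; apply: induced_matching_add_edge.
Qed.

Section VertexDeletion.
Variables (S : {set T}) (v : T).

Lemma in_drop_at M g : (g \in drop_at v M) = (g \in M) && (v \notin g).
Proof. by rewrite /drop_at !inE; case: (g \in M); rewrite ?andbT. Qed.

Lemma notin_cover_drop_at M : v \notin cover (drop_at v M).
Proof. by apply/negP => /bigcupP[g]; rewrite in_drop_at => /andP[_ /negP]. Qed.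

Lemma matching_delete_notin_cover M : is_matching e (S :\ v) M -> v \notin cover M.
Proof.
move=> /matching_cover_sub/subsetP coverM.
by apply/negP => /coverM; rewrite !inE eqxx.
Qed.

Lemma induced_matching_delete M :
  is_induced_matching e S M -> v \notin cover M -> is_induced_matching e (S :\ v) M.
Proof.
move=> indM vM; apply: (induced_matching_widen indM); apply/subsetP => u uM.
rewrite in_setD1 (subsetP (matching_cover_sub (induced_matchingW indM)) u uM) andbT.
by apply: contraNneq vM => <-.
Qed.

Lemma induced_matching_undelete M :
  is_induced_matching e (S :\ v) M -> is_induced_matching e S M.
Proof.
move=> indM; apply: (induced_matching_widen indM).
exact: subset_trans (matching_cover_sub (induced_matchingW indM)) (subD1set S v).
Qed.

Lemma maximal_im_delete M :
  is_maximal_im e S M -> v \notin cover M -> is_maximal_im e (S :\ v) M.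
Proof.
move=> /is_maximal_imP[indM maxM] vM; apply/is_maximal_imP.
split; first exact: induced_matching_delete.
by move=> M' /maxM; apply: contra; apply: induced_matching_undelete.
Qed.

Lemma card_MIM_delete :
  #|MIM e (S :\ v)| = #|[set M in MIM e S | v \notin cover M]| + phi e S v.
Proof.
rewrite -(cardsID (MIM e S) (MIM e (S :\ v))); congr (_ + _).
  apply: eq_card => M; rewrite !inE; apply/andP/andP => [[maxMv maxM]|[maxM vM]].
    by split=> //; apply/matching_delete_notin_cover/induced_matchingW/maximal_imW.
  by split=> //; apply: maximal_im_delete.
by apply: eq_card => M; rewrite !inE andbC.
Qed.

Lemma maximal_im_extend_cover M M' :
  is_maximal_im e (S :\ v) M -> M \proper M' -> is_induced_matching e S M' ->
  v \in cover M' /\ drop_at v M' = M.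
Proof.
move=> /is_maximal_imP[indM maxM] ltM indM'.
have vM' : v \in cover M'.
  by apply: contraT => vM'; move: (maxM _ ltM); rewrite induced_matching_delete.
split=> //; apply/eqP; rewrite eq_sym eqEproper; apply/andP; split.
  apply/subsetP => g gM; rewrite in_drop_at (subsetP (proper_sub ltM) g gM) /=.
  apply: contraNN (matching_delete_notin_cover (induced_matchingW indM)) => vg.
  by apply/bigcupP; exists g.
apply: (contraL (maxM _)); apply: induced_matching_delete (notin_cover_drop_at _).
exact: induced_matching_subset indM' (subsetDl _ _).
Qed.

Lemma maximal_im_extend M M' :
  is_maximal_im e (S :\ v) M -> M \proper M' -> is_induced_matching e S M' ->
  [/\ is_maximal_im e S M', v \in cover M' & drop_at v M' = M].
Proof.
move=> maxM ltM indM'; have [vM' dropM'] := maximal_im_extend_cover maxM ltM indM'.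
split=> //; apply/is_maximal_imP; split=> // M'' ltM''; apply/negP => indM''.
have [_ dropM''] := maximal_im_extend_cover maxM (proper_trans ltM ltM'') indM''.
have [_ [g gM'' gM']] := properP ltM''.
have /bigcupP[f fM' vf] := vM'.
have vg : v \in g.
  apply: contraNT gM' => vg; have : g \in drop_at v M'' by rewrite in_drop_at gM'' vg.
  by rewrite dropM'' -dropM' in_drop_at => /andP[].
have fM'' := subsetP (proper_sub ltM'') f fM'.
by move: gM'; rewrite (matching_edge_eq (induced_matchingW indM'') gM'' fM'' vg vf) fM'.
Qed.

Lemma phi_le_beta : phi e S v <= beta e S v.
Proof.
apply: leq_trans (leq_imset_card (drop_at v) _).
apply: subset_leq_card; apply/subsetP => M; rewrite !inE => /andP[maxM notmaxM].
have [M' ltM indM'] :=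
  induced_matching_extend (induced_matching_undelete (maximal_imW maxM)) notmaxM.
have [maxM' vM' dropM'] := maximal_im_extend maxM ltM indM'.
by apply/imsetP; exists M'; rewrite ?inE ?maxM' ?vM' ?dropM'.
Qed.

Lemma card_MIM_split :
  #|MIM e S| = #|[set M in MIM e S | v \notin cover M]|
             + #|[set M in MIM e S | v \in cover M]|.
Proof.
rewrite addnC -(cardsID [set M | v \in cover M] (MIM e S)).
by congr (_ + _); apply: eq_card => M; rewrite !inE andbC.
Qed.

Lemma card_MIM_cover :
  #|[set M in MIM e S | v \in cover M]| = alpha e S v + beta e S v.
Proof.
rewrite addnC -(cardsID [set M | is_maximal_im e (S :\ v) (drop_at v M)]).
by congr (_ + _); apply: eq_card => M; rewrite !inE; [rewrite andbA | rewrite andbC andbA].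
Qed.

Hypothesis vS : v \in S.

Lemma card_MIM_edge p : p \in S -> e v p ->
  #|[set M in MIM e S | [set v; p] \in M]| = #|MIM e (far S v p)|.
Proof.
move=> pS evp.
have -> : [set M in MIM e S | [set v; p] \in M] =
          [set [set v; p] |: N | N in MIM e (far S v p)].
  apply/setP => M; rewrite !inE; apply/andP/imsetP => [[maxM vpM]|[N maxN ->]].
    by exists (M :\ [set v; p]); [rewrite inE maximal_im_drop_edge | rewrite setD1K].
  by rewrite inE in maxN; rewrite setU11 maximal_im_add_edge.
apply: card_in_imset => N1 N2; rewrite !inE => /maximal_imW/induced_matchingW N1far.
move=> /maximal_imW/induced_matchingW N2far eqN.
by rewrite -(setU1K (matching_far_notin N1far)) eqN setU1K // (matching_far_notin N2far).
Qed.

Lemma card_MIM_cover_sum :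
  #|[set M in MIM e S | v \in cover M]| =
  \sum_(p in nbhd e S v) #|MIM e (far S v p)|.
Proof.
have partners M : M \in MIM e S ->
    (v \in cover M : nat) = \sum_(p in nbhd e S v) ([set v; p] \in M : nat).
  rewrite inE => /maximal_imW/induced_matchingW/card_matching_partners <-.
  by rewrite -sum1dep_card big_mkcondr.
rewrite -sum1dep_card big_mkcondr (eq_bigr _ partners) exchange_big.
apply: eq_bigr => p; rewrite inE => /andP[pS evp].
by rewrite -card_MIM_edge // -sum1dep_card big_mkcondr.
Qed.

End VertexDeletion.

End InducedMatchings.

Theorem proposition2p5 (T : finType) (e : rel T)
  (e_sym : symmetric e) (e_irr : irreflexive e) (v : T) :
  let G := [set: T] in
  let lhs := #|MIM e (G :\ v)| + alpha e G v in
  let rhs := #|MIM e (G :\ v)| +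
             \sum_(p in nbhd e G v)
                #|MIM e (G :\: (cnbhd e G v :|: cnbhd e G p))| in
  [/\ lhs <= #|MIM e G|, #|MIM e G| <= rhs,
      (lhs = #|MIM e G| <-> beta e G v = phi e G v) &
      (#|MIM e G| = rhs <-> phi e G v = 0)].
Proof.
move=> G lhs rhs; rewrite {}/lhs {}/rhs {}/G.
rewrite -(card_MIM_cover_sum e_sym e_irr (in_setT v)) card_MIM_cover.
rewrite (card_MIM_delete e_sym e_irr) (card_MIM_split e _ v) card_MIM_cover.
have le_phi_beta := phi_le_beta e_sym e_irr [set: T] v.
by split; [lia | lia | split; lia | split; lia].
Qed.
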